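(* Let $\{a_n : n\in\mathbb{R}\cap[1,\infty)\}$ be positive real numbers such that (1) there is $c>0$ such that $\dfrac{a_{m^2n}}{a_{mn}}=\dfrac{a_{mn}}{a_n}\bigl(1+O(n^{-c})\bigr)$ for all $m\in(1.1,10)$, where the constant implicit in $O(n^{-c})$ does not depend on $m$ in this range; and (2) $\lim_{\epsilon\to0}\liminf_{n\to\infty}\inf_{n\le s\le t\le(1+\epsilon)n}\dfrac{a_t}{a_s}\ge 1$. Then there exist $0<C<\infty$, $\alpha\in\mathbb{R}$ and $c'>0$ such that $a_n=Cn^{\alpha}\bigl(1+O(n^{-c'})\bigr)$ as $n\to\infty$.
   Context: $O(n^{-c})$ denotes a quantity bounded in absolute value by a constant times $n^{-c}$ for all $n$. *)

From Stdlib Require Export Reals.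
Open Scope R_scope.

Definition hyp_ratio (a : R -> R) : Prop :=
  exists c : R, 0 < c /\
  exists K : R, forall m n : R, 11/10 < m < 10 -> 1 <= n ->
    exists d : R, Rabs d <= K * Rpower n (- c) /\
      a (m ^ 2 * n) / a (m * n) = a (m * n) / a n * (1 + d).

(* Hypothesis (2): lim_{eps->0+} liminf_{n->oo} inf_{n<=s<=t<=(1+eps)n} a_t/a_s >= 1,
   unfolded: the map eps |-> liminf ... is nonincreasing in eps and <= 1, so
   the condition says: for every delta > 0 there are eps > 0 and N such that
   a_t/a_s >= 1 - delta whenever N <= n <= s <= t <= (1+eps) n. *)
Definition hyp_slow (a : R -> R) : Prop :=
  forall delta : R, 0 < delta ->
  exists eps : R, 0 < eps /\
  exists N : R, forall n s t : R, N <= n -> n <= s -> s <= t -> t <= (1 + eps) * n ->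
    1 - delta <= a t / a s.

(* Write f(x) = ln a(e^x).  Hypothesis (1) says that the second differences
   f(x+2h) - 2 f(x+h) + f(x), 1 <= h <= 2, are O(e^{-cx}); hypothesis (2) says
   that f cannot drop by more than ln 2 over short intervals.  The unit
   increments f(x+1) - f(x) therefore converge geometrically along x + N to a
   1-periodic function L.  Summing increments, f(x+N) = f(x) + N L(x) + O(1), so
   the one-sided bound on f forces L to be nondecreasing, hence constant, say
   alpha.  Repeating the argument with f(x) - alpha x gives a 1-periodic p with
   f(x) = alpha x + p(x) + O(e^{-cx}).  The one-sided bound makes p of bounded
   oscillation, and periodicity makes its second differences, which are
   O(e^{-cx}), vanish; along x + k h the function p is then affine in k and
   bounded, so p(x+h) = p(x) for every h in [1,2], and p is a constant beta.
   At x = ln n this reads a_n = e^beta n^alpha (1 + O(n^{-c})). *)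

From Stdlib Require Import Reals Lra Lia.
From Stdlib Require Import IndefiniteDescription.
From Coquelicot Require Import Rcomplements.
Open Scope R_scope.

Definition periodic_from (X : R) (P : R -> R) : Prop :=
  forall x, X <= x -> P (x + 1) = P x.

Definition increments_ge (X eta m : R) (P : R -> R) : Prop :=
  forall u v, X <= u -> u <= v -> v <= u + eta -> m <= P v - P u.

Definition diff2 (P : R -> R) (h y : R) : R := P (y + h + h) - 2 * P (y + h) + P y.

Definition log_scale (a : R -> R) (x : R) : R := ln (a (exp x)).

Lemma exp_le x y : x <= y -> exp x <= exp y.
Proof. intros [Hlt | ->]; [left; apply exp_increasing |]; lra. Qed.

Lemma one_le_exp x : 0 <= x -> 1 <= exp x.
Proof. intros Hx; pose proof (exp_ineq1_le x); lra. Qed.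

Lemma nonpos_of_linear_bound z W : (forall n : nat, INR n * z <= W) -> z <= 0.
Proof.
  intros Hz; destruct (Rle_or_lt z 0) as [Hle | Hlt]; [exact Hle |].
  destruct (INR_archimed z W Hlt) as [n Hn]; specialize (Hz n); lra.
Qed.

Lemma periodic_from_nat X P : periodic_from X P ->
  forall (n : nat) x, X <= x -> P (x + INR n) = P x.
Proof.
  intros HP n; induction n as [| n IH]; intros x Hx.
  - change (INR 0) with 0; rewrite Rplus_0_r; reflexivity.
  - rewrite S_INR, <- Rplus_assoc, HP by (pose proof (pos_INR n); lra).
    now apply IH.
Qed.

Lemma increments_ge_nonpos X eta m P : 0 <= eta -> increments_ge X eta m P -> m <= 0.
Proof.
  intros Heta HP; pose proof (HP X X (Rle_refl X) (Rle_refl X) ltac:(lra)); lra.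
Qed.

Lemma increments_ge_mul X eta m P : 0 <= eta -> increments_ge X eta m P ->
  forall k : nat, increments_ge X (INR k * eta) (INR k * m) P.
Proof.
  intros Heta HP k; pose proof (increments_ge_nonpos X eta m P Heta HP) as Hm.
  induction k as [| k IH]; intros u v Hu Huv Hv.
  - change (INR 0) with 0 in *; replace v with u by lra; lra.
  - rewrite S_INR in *; destruct (Rle_or_lt v (u + eta)) as [Hshort | Hlong].
    + pose proof (HP u v Hu Huv Hshort); pose proof (pos_INR k); nra.
    + pose proof (IH u (v - eta) Hu ltac:(lra) ltac:(lra)).
      pose proof (HP (v - eta) v ltac:(lra) ltac:(lra) ltac:(lra)); lra.
Qed.

Lemma increments_ge_sub_linear X eta m f alpha : increments_ge X eta m f ->
  increments_ge X eta (m - Rabs alpha * eta) (fun x => f x - alpha * x).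
Proof.
  intros Hf u v Hu Huv Hv; pose proof (Hf u v Hu Huv Hv).
  assert (alpha * (v - u) <= Rabs alpha * eta).
  { apply Rle_trans with (Rabs alpha * (v - u)).
    - apply Rmult_le_compat_r; [lra | apply Rle_abs].
    - apply Rmult_le_compat_l; [apply Rabs_pos | lra]. }
  lra.
Qed.

(* Chaining short intervals gives a lower bound on all increments, uniform
   thanks to periodicity. *)
Lemma periodic_increments_ge X eta m P : 0 < eta -> periodic_from X P ->
  increments_ge X eta m P ->
  exists k : nat, forall u v, X <= u -> u <= v -> INR k * m <= P v - P u.
Proof.
  intros Heta HP Hinc.
  destruct (INR_archimed eta 1 Heta) as [k Hk]; exists k.
  assert (Hunit : forall u v, X <= u -> u <= v -> v <= u + 1 -> INR k * m <= P v - P u).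
  { intros u v Hu Huv Hv; apply (increments_ge_mul X eta m P ltac:(lra) Hinc k); lra. }
  assert (Hshift : forall (n : nat) u v, X <= u -> u <= v -> v <= u + INR n ->
            INR k * m <= P v - P u).
  { intros n; induction n as [| n IH]; intros u v Hu Huv Hv.
    - change (INR 0) with 0 in Hv; apply Hunit; lra.
    - rewrite S_INR in Hv; destruct (Rle_or_lt v (u + 1)).
      + apply Hunit; lra.
      + rewrite <- (HP u Hu); apply IH; lra. }
  intros u v Hu Huv; destruct (INR_unbounded (v - u)) as [n Hn].
  apply (Hshift n); lra.
Qed.

Lemma periodic_nondecreasing_const X P : periodic_from X P ->
  (forall u v, X <= u -> u <= v -> P u <= P v) -> forall y, X <= y -> P y = P X.
Proof.
  intros HP Hmono y Hy; destruct (INR_unbounded (y - X)) as [n Hn].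
  pose proof (Hmono X y (Rle_refl X) Hy) as Hlow.
  pose proof (Hmono y (X + INR n) Hy ltac:(lra)) as Hup.
  rewrite (periodic_from_nat X P HP n X (Rle_refl X)) in Hup; lra.
Qed.

Lemma const_of_shift_invariant X (P : R -> R) :
  (forall h, 1 <= h <= 2 -> forall y, X <= y -> P (y + h) = P y) ->
  forall y, X <= y -> P y = P X.
Proof.
  intros HP y Hy; destruct (INR_unbounded (y - X)) as [n Hn].
  revert y Hy Hn; induction n as [| n IH]; intros y Hy Hn.
  - change (INR 0) with 0 in Hn; lra.
  - rewrite S_INR in Hn; destruct (Rle_or_lt y (X + 1)).
    + rewrite <- (HP (X + 2 - y) ltac:(lra) y Hy).
      replace (y + (X + 2 - y)) with (X + 2) by ring.
      apply HP; lra.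
    + replace y with (y - 1 + 1) by ring.
      rewrite (HP 1 ltac:(lra) (y - 1)) by lra; apply IH; lra.
Qed.

Lemma diff2_arith_progression X P h : 0 <= h ->
  (forall y, X <= y -> diff2 P h y = 0) ->
  forall (k : nat) y, X <= y -> P (y + INR k * h) - P y = INR k * (P (y + h) - P y).
Proof.
  intros Hh HP k y Hy.
  assert (Hstep : forall k : nat,
            P (y + INR k * h + h) - P (y + INR k * h) = P (y + h) - P y).
  { intros j; induction j as [| j IH].
    - change (INR 0) with 0; rewrite Rmult_0_l, Rplus_0_r; reflexivity.
    - pose proof (pos_INR j).
      pose proof (HP (y + INR j * h) ltac:(nra)) as Hj; unfold diff2 in Hj.
      rewrite S_INR; replace (y + (INR j + 1) * h) with (y + INR j * h + h) by ring.
      lra. }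
  induction k as [| k IH].
  - change (INR 0) with 0; rewrite Rmult_0_l, Rplus_0_r; ring.
  - pose proof (Hstep k).
    rewrite S_INR; replace (y + (INR k + 1) * h) with (y + INR k * h + h) by ring.
    lra.
Qed.

(* Along y + k h the function is affine in k and has bounded oscillation, so
   its slope vanishes. *)
Lemma periodic_const_of_diff2 X w P : periodic_from X P ->
  (forall u v, X <= u -> u <= v -> w <= P v - P u) ->
  (forall h, 1 <= h <= 2 -> forall y, X <= y -> diff2 P h y = 0) ->
  forall y, X <= y -> P y = P X.
Proof.
  intros Hper Hlow Hdiff2; apply const_of_shift_invariant.
  intros h Hh y Hy.
  pose proof (diff2_arith_progression X P h ltac:(lra) (Hdiff2 h Hh)) as Hprog.
  assert (P (y + h) - P y <= 0).
  { apply (nonpos_of_linear_bound _ (- w)); intros n.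
    destruct (INR_unbounded (INR n * h)) as [N HN].
    pose proof (pos_INR n).
    pose proof (Hlow (y + INR n * h) (y + INR N) ltac:(nra) ltac:(lra)) as Hback.
    rewrite (periodic_from_nat X P Hper N y Hy) in Hback.
    pose proof (Hprog n y Hy); lra. }
  assert (- (P (y + h) - P y) <= 0).
  { apply (nonpos_of_linear_bound _ (- w)); intros n.
    pose proof (pos_INR n).
    pose proof (Hlow y (y + INR n * h) Hy ltac:(nra)).
    pose proof (Hprog n y Hy); lra. }
  lra.
Qed.

Section ExponentialDecay.

Variable c : R.
Hypothesis c_pos : 0 < c.

Definition decay (x : R) : R := exp (- c * x).

(* [geom_tail M * decay x] bounds the tail sum of [M * decay (x + j)], j >= 0. *)
Definition geom_tail (M : R) : R := M / (1 - exp (- c)).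

Lemma decay_pos x : 0 < decay x.
Proof. apply exp_pos. Qed.

Lemma decay_succ x : decay (x + 1) = exp (- c) * decay x.
Proof. unfold decay; rewrite <- exp_plus; f_equal; ring. Qed.

Lemma decay_antitone x y : x <= y -> decay y <= decay x.
Proof. intros Hxy; apply exp_le; nra. Qed.

Lemma exp_neg_lt_1 : exp (- c) < 1.
Proof. rewrite <- exp_0; apply exp_increasing; lra. Qed.

Lemma geom_tail_nonneg M : 0 <= M -> 0 <= geom_tail M.
Proof.
  intros HM; pose proof exp_neg_lt_1; apply Rdiv_le_0_compat; lra.
Qed.

Lemma decay_eventually_le M eps : 0 < eps ->
  exists X, forall x, X <= x -> M * decay x <= eps.
Proof.
  intros Heps; exists (Rabs M / (c * eps)); intros x Hx.
  assert (HX : 0 <= Rabs M / (c * eps)).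
  { apply Rdiv_le_0_compat; [apply Rabs_pos | nra]. }
  assert (Hcx : Rabs M <= c * eps * x).
  { replace (Rabs M) with (Rabs M / (c * eps) * (c * eps)) by (field; lra).
    rewrite (Rmult_comm (c * eps) x); apply Rmult_le_compat_r; nra. }
  assert (Hlin : decay x * (1 + c * x) <= 1).
  { unfold decay; pose proof (exp_ineq1_le (c * x)); pose proof (exp_pos (- c * x)).
    assert (exp (- c * x) * exp (c * x) = 1).
    { rewrite <- exp_plus; replace (- c * x + c * x) with 0 by ring; apply exp_0. }
    nra. }
  pose proof (decay_pos x); pose proof (Rle_abs M).
  assert (Rabs M * decay x <= c * eps * x * decay x) by (apply Rmult_le_compat_r; lra).
  nra.
Qed.

Lemma eq0_of_decay_bound z M x :
  (forall n : nat, Rabs z <= M * decay (x + INR n)) -> z = 0.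
Proof.
  intros Hz.
  assert (Hle : Rabs z <= 0).
  { apply le_epsilon; intros eps Heps.
    destruct (decay_eventually_le M eps Heps) as [X HX].
    destruct (INR_unbounded (X - x)) as [n Hn].
    specialize (Hz n); specialize (HX (x + INR n) ltac:(lra)); lra. }
  destruct (Req_dec z 0) as [Hz0 | Hz0]; [exact Hz0 |].
  pose proof (Rabs_pos_lt z Hz0); lra.
Qed.

Lemma telescoping_decay_bound M x (v : nat -> R) :
  (forall j : nat, Rabs (v (S j) - v j) <= M * decay (x + INR j)) ->
  forall n k : nat, Rabs (v (n + k)%nat - v n) <=
    geom_tail M * (decay (x + INR n) - decay (x + INR (n + k))).
Proof.
  intros Hv n k; pose proof exp_neg_lt_1.
  induction k as [| k IH].
  - rewrite Nat.add_0_r, !Rminus_diag, Rabs_R0; lra.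
  - rewrite Nat.add_succ_r, S_INR.
    replace (x + (INR (n + k) + 1)) with (x + INR (n + k) + 1) by ring.
    rewrite decay_succ.
    replace (v (S (n + k)) - v n)
      with ((v (S (n + k)) - v (n + k)%nat) + (v (n + k)%nat - v n)) by ring.
    eapply Rle_trans; [apply Rabs_triang |].
    pose proof (Hv (n + k)%nat).
    assert (geom_tail M * (decay (x + INR n) - exp (- c) * decay (x + INR (n + k)))
            = geom_tail M * (decay (x + INR n) - decay (x + INR (n + k)))
              + M * decay (x + INR (n + k))) by (unfold geom_tail; field; lra).
    lra.
Qed.

Lemma limit_along_shifts phi M X : 0 <= M ->
  (forall x, X <= x -> Rabs (phi (x + 1) - phi x) <= M * decay x) ->
  forall x, X <= x -> exists l, forall n : nat,
    Rabs (phi (x + INR n) - l) <= geom_tail M * decay (x + INR n).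
Proof.
  intros HM Hphi x Hx.
  set (u := fun n : nat => phi (x + INR n)).
  assert (Hu : forall n k : nat,
            Rabs (u (n + k)%nat - u n) <= geom_tail M * decay (x + INR n)).
  { intros n k; eapply Rle_trans.
    - apply (telescoping_decay_bound M x u); intros j; unfold u.
      rewrite S_INR, <- Rplus_assoc; apply Hphi; pose proof (pos_INR j); lra.
    - pose proof (decay_pos (x + INR (n + k))); pose proof (geom_tail_nonneg M HM); nra. }
  assert (Hcauchy : Cauchy_crit u).
  { intros eps Heps.
    destruct (decay_eventually_le (geom_tail M) (eps / 3) ltac:(lra)) as [Y HY].
    destruct (INR_unbounded (Y - x)) as [N HN]; exists N; intros n m Hn Hm.
    specialize (HY (x + INR N) ltac:(lra)).
    pose proof (Hu N (n - N)%nat) as Hn'; pose proof (Hu N (m - N)%nat) as Hm'.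
    replace (N + (n - N))%nat with n in Hn' by lia.
    replace (N + (m - N))%nat with m in Hm' by lia.
    apply Rabs_le_between in Hn', Hm'; unfold Rdist; apply Rabs_def1; lra. }
  destruct (R_complete u Hcauchy) as [l Hl]; exists l; intros n.
  apply le_epsilon; intros eps Heps.
  destruct (Hl eps Heps) as [N HN]; specialize (HN (n + N)%nat ltac:(lia)).
  unfold Rdist in HN; apply Rabs_def2 in HN.
  pose proof (Hu n N) as Hn'; apply Rabs_le_between in Hn'.
  change (phi (x + INR n)) with (u n); apply Rabs_le; lra.
Qed.

(* [psi x] is the limit of [phi (x + n)]. *)
Lemma periodic_approximation phi M X : 0 <= M ->
  (forall x, X <= x -> Rabs (phi (x + 1) - phi x) <= M * decay x) ->
  exists psi, periodic_from X psi /\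
    forall x, X <= x -> Rabs (phi x - psi x) <= geom_tail M * decay x.
Proof.
  intros HM Hphi.
  assert (Hlim : forall x, exists l, X <= x -> forall n : nat,
            Rabs (phi (x + INR n) - l) <= geom_tail M * decay (x + INR n)).
  { intros x; destruct (Rle_or_lt X x) as [Hx | Hx].
    - destruct (limit_along_shifts phi M X HM Hphi x Hx) as [l Hl].
      exists l; intros _; exact Hl.
    - exists 0; intros Hx'; lra. }
  destruct (functional_choice _ Hlim) as [psi Hpsi]; exists psi; split.
  - intros x Hx; apply Rminus_diag_uniq.
    apply (eq0_of_decay_bound _ (2 * geom_tail M) (x + 1)); intros n.
    pose proof (Hpsi (x + 1) ltac:(lra) n) as Hnext.
    pose proof (Hpsi x Hx (S n)) as Hcur.
    rewrite S_INR in Hcur; replace (x + (INR n + 1)) with (x + 1 + INR n) in Hcur by ring.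
    apply Rabs_le_between in Hnext, Hcur; apply Rabs_le; lra.
  - intros x Hx; pose proof (Hpsi x Hx 0%nat) as Hbase.
    change (INR 0) with 0 in Hbase; rewrite Rplus_0_r in Hbase; exact Hbase.
Qed.

Lemma drift_sum_bound phi L M X : 0 <= M -> periodic_from X L ->
  (forall x, X <= x -> Rabs (phi (x + 1) - phi x - L x) <= M * decay x) ->
  forall x, X <= x -> forall n : nat,
    Rabs (phi (x + INR n) - phi x - INR n * L x) <= geom_tail M * decay x.
Proof.
  intros HM HL Hphi x Hx n.
  set (v := fun k : nat => phi (x + INR k) - INR k * L x).
  assert (Hv : forall j : nat, Rabs (v (S j) - v j) <= M * decay (x + INR j)).
  { intros j; unfold v; rewrite S_INR.
    rewrite <- (periodic_from_nat X L HL j x Hx).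
    replace (x + (INR j + 1)) with (x + INR j + 1) by ring.
    eapply Rle_trans; [| apply (Hphi (x + INR j)); pose proof (pos_INR j); lra].
    right; f_equal; ring. }
  replace (phi (x + INR n) - phi x - INR n * L x) with (v (0 + n)%nat - v 0%nat)
    by (unfold v; change (INR 0) with 0; rewrite Nat.add_0_l, Rplus_0_r; ring).
  eapply Rle_trans; [apply (telescoping_decay_bound M x v Hv) |].
  change (INR 0) with 0; rewrite Rplus_0_r.
  pose proof (decay_pos (x + INR (0 + n))); pose proof (geom_tail_nonneg M HM); nra.
Qed.

Lemma periodic_decay_eq0 Q M X : periodic_from X Q ->
  (forall y, X <= y -> Rabs (Q y) <= M * decay y) -> forall y, X <= y -> Q y = 0.
Proof.
  intros HQ Hbound y Hy; apply (eq0_of_decay_bound _ M y); intros n.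
  rewrite <- (periodic_from_nat X Q HQ n y Hy).
  apply Hbound; pose proof (pos_INR n); lra.
Qed.

(* Compare [f (x + n) - f (x' + n)] for large n: it is bounded below, and
   equals n (L x - L x') + O(1). *)
Lemma drift_increments_ge0 f L M X eta m : 0 <= M -> periodic_from X L ->
  (forall x, X <= x -> Rabs (f (x + 1) - f x - L x) <= M * decay x) ->
  increments_ge X eta m f -> increments_ge X eta 0 L.
Proof.
  intros HM HL Hf Hinc x x' Hx Hxx' Hx'.
  assert (L x - L x' <= 0); [| lra].
  apply (nonpos_of_linear_bound _ (- m + geom_tail M * (decay x + decay x') + f x' - f x)).
  intros n; pose proof (pos_INR n).
  pose proof (Hinc (x + INR n) (x' + INR n) ltac:(lra) ltac:(lra) ltac:(lra)).
  pose proof (drift_sum_bound f L M X HM HL Hf x Hx n) as Hsx.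
  pose proof (drift_sum_bound f L M X HM HL Hf x' ltac:(lra) n) as Hsx'.
  apply Rabs_le_between in Hsx, Hsx'; lra.
Qed.

Lemma increments_ge_approx F p M X eta m : 0 <= M ->
  (forall x, X <= x -> Rabs (F x - p x) <= M * decay x) ->
  increments_ge X eta m F -> increments_ge X eta (m - 2 * M * decay X) p.
Proof.
  intros HM Hclose Hinc u v Hu Huv Hv.
  pose proof (Hclose u Hu) as Hu'; pose proof (Hclose v ltac:(lra)) as Hv'.
  apply Rabs_le_between in Hu', Hv'.
  assert (M * decay u <= M * decay X) by (apply Rmult_le_compat_l, decay_antitone; lra).
  assert (M * decay v <= M * decay X) by (apply Rmult_le_compat_l, decay_antitone; lra).
  pose proof (Hinc u v Hu Huv Hv); lra.
Qed.

Lemma diff2_approx F p M X h : 0 <= M -> 0 <= h ->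
  (forall x, X <= x -> Rabs (F x - p x) <= M * decay x) ->
  forall y, X <= y -> Rabs (diff2 F h y - diff2 p h y) <= 4 * M * decay y.
Proof.
  intros HM Hh Hclose y Hy.
  pose proof (Hclose y Hy) as Hat0.
  pose proof (Hclose (y + h) ltac:(lra)) as Hat1.
  pose proof (Hclose (y + h + h) ltac:(lra)) as Hat2.
  apply Rabs_le_between in Hat0, Hat1, Hat2.
  assert (M * decay (y + h) <= M * decay y)
    by (apply Rmult_le_compat_l, decay_antitone; lra).
  assert (M * decay (y + h + h) <= M * decay y)
    by (apply Rmult_le_compat_l, decay_antitone; lra).
  unfold diff2; apply Rabs_le; lra.
Qed.

Lemma affine_asymptotics f B X eta m : 0 <= B -> 0 < eta ->
  (forall h, 1 <= h <= 2 -> forall x, X <= x -> Rabs (diff2 f h x) <= B * decay x) ->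
  increments_ge X eta m f ->
  exists alpha beta M, forall x, X <= x -> Rabs (f x - alpha * x - beta) <= M * decay x.
Proof.
  intros HB Heta Hdiff2 Hinc.
  destruct (periodic_approximation (fun x => f (x + 1) - f x) B X HB) as [L [HL HfL]].
  { intros x Hx; eapply Rle_trans; [| apply (Hdiff2 1 ltac:(lra) x Hx)].
    right; unfold diff2; f_equal; ring. }
  cbv beta in HfL; set (B1 := geom_tail B) in HfL.
  assert (HB1 : 0 <= B1) by now apply geom_tail_nonneg.
  assert (Hconst : forall y, X <= y -> L y = L X).
  { apply periodic_nondecreasing_const; [exact HL |].
    destruct (periodic_increments_ge X eta 0 L Heta HL
                (drift_increments_ge0 f L B1 X eta m HB1 HL HfL Hinc)) as [k Hk].
    intros u v Hu Huv; specialize (Hk u v Hu Huv); lra. }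
  set (alpha := L X); set (F := fun x => f x - alpha * x).
  destruct (periodic_approximation F B1 X HB1) as [p [Hp HFp]].
  { intros x Hx; eapply Rle_trans; [| apply (HfL x Hx)].
    right; f_equal; unfold F; rewrite (Hconst x Hx); unfold alpha; ring. }
  set (B2 := geom_tail B1) in HFp.
  assert (HB2 : 0 <= B2) by now apply geom_tail_nonneg.
  assert (Hp_inc : increments_ge X eta (m - Rabs alpha * eta - 2 * B2 * decay X) p).
  { apply (increments_ge_approx F); [exact HB2 | exact HFp |].
    now apply increments_ge_sub_linear. }
  destruct (periodic_increments_ge X eta _ p Heta Hp Hp_inc) as [k Hk].
  assert (Hp_diff2 : forall h, 1 <= h <= 2 -> forall y, X <= y -> diff2 p h y = 0).
  { intros h Hh; apply (periodic_decay_eq0 (diff2 p h) (B + 4 * B2) X).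
    - intros y Hy; unfold diff2.
      replace (y + 1 + h + h) with (y + h + h + 1) by ring.
      replace (y + 1 + h) with (y + h + 1) by ring.
      rewrite (Hp (y + h + h)), (Hp (y + h)), (Hp y) by lra; reflexivity.
    - intros y Hy.
      pose proof (diff2_approx F p B2 X h HB2 ltac:(lra) HFp y Hy) as Happrox.
      pose proof (Hdiff2 h Hh y Hy) as Hf.
      replace (diff2 F h y) with (diff2 f h y) in Happrox by (unfold diff2, F; ring).
      apply Rabs_le_between in Happrox, Hf; apply Rabs_le; lra. }
  exists alpha, (p X), B2; intros x Hx.
  rewrite <- (periodic_const_of_diff2 X _ p Hp Hk Hp_diff2 x Hx).
  exact (HFp x Hx).
Qed.

End ExponentialDecay.

Lemma Rabs_ln_1_plus_le d : Rabs d <= 1 / 2 -> Rabs (ln (1 + d)) <= 2 * Rabs d.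
Proof.
  intros Hd; apply Rabs_le_between in Hd.
  assert (Hexp : exp (ln (1 + d)) = 1 + d) by (apply exp_ln; lra).
  pose proof (exp_ineq1_le (ln (1 + d))) as Hup; rewrite Hexp in Hup.
  pose proof (exp_ineq1_le (- ln (1 + d))) as Hlow; rewrite exp_Ropp, Hexp in Hlow.
  assert (Hlow' : (1 - ln (1 + d)) * (1 + d) <= 1).
  { apply Rle_trans with (/ (1 + d) * (1 + d)).
    - apply Rmult_le_compat_r; lra.
    - right; field; lra. }
  apply Rabs_le; destruct (Rle_or_lt 0 d);
    [rewrite Rabs_right by lra | rewrite Rabs_left by lra]; nra.
Qed.

Lemma Rabs_exp_sub_1_le e : Rabs e <= 1 / 2 -> Rabs (exp e - 1) <= 2 * Rabs e.
Proof.
  intros He; apply Rabs_le_between in He.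
  pose proof (exp_ineq1_le e); pose proof (exp_ineq1_le (- e)); pose proof (exp_pos e).
  assert (exp e * exp (- e) = 1) by (rewrite <- exp_plus, Rplus_opp_r; apply exp_0).
  assert (exp e * (1 - e) <= 1) by nra.
  assert (exp e <= 2) by nra.
  apply Rabs_le; destruct (Rle_or_lt 0 e);
    [rewrite Rabs_right by lra | rewrite Rabs_left by lra]; nra.
Qed.

Lemma hyp_ratio_log_diff2 a : (forall n, 1 <= n -> 0 < a n) -> hyp_ratio a ->
  exists c, 0 < c /\ exists B X, 0 <= B /\
    forall h, 1 <= h <= 2 -> forall x, X <= x ->
      Rabs (diff2 (log_scale a) h x) <= B * decay c x.
Proof.
  intros Hpos [c [Hc [K HK]]]; exists c; split; [exact Hc |].
  destruct (decay_eventually_le c Hc (Rabs K) (1 / 2) ltac:(lra)) as [X0 HX0].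
  exists (2 * Rabs K), (Rmax X0 0); split; [pose proof (Rabs_pos K); lra |].
  intros h Hh x Hx; pose proof (Rmax_l X0 0); pose proof (Rmax_r X0 0).
  assert (Hm : 11 / 10 < exp h < 10).
  { split; [pose proof (exp_ineq1_le h); lra |].
    pose proof (exp_le h (1 + 1) ltac:(lra)) as H2; rewrite exp_plus in H2.
    pose proof exp_le_3; pose proof (exp_pos 1); nra. }
  destruct (HK (exp h) (exp x) Hm (one_le_exp x ltac:(lra))) as [d [Hd Hratio]].
  unfold Rpower in Hd; rewrite ln_exp in Hd; change (exp (- c * x)) with (decay c x) in Hd.
  assert (HKd : K * decay c x <= Rabs K * decay c x).
  { apply Rmult_le_compat_r; [left; apply decay_pos | apply Rle_abs]. }
  specialize (HX0 x ltac:(lra)).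
  replace (exp h ^ 2 * exp x) with (exp (x + h + h)) in Hratio by (rewrite !exp_plus; ring).
  replace (exp h * exp x) with (exp (x + h)) in Hratio by (rewrite exp_plus; ring).
  assert (P0 : 0 < a (exp x)) by (apply Hpos, one_le_exp; lra).
  assert (P1 : 0 < a (exp (x + h))) by (apply Hpos, one_le_exp; lra).
  assert (P2 : 0 < a (exp (x + h + h))) by (apply Hpos, one_le_exp; lra).
  assert (Hd2 : Rabs d <= 1 / 2) by lra.
  assert (Hdiff2 : diff2 (log_scale a) h x = ln (1 + d)).
  { apply (f_equal ln) in Hratio.
    rewrite ln_mult, !ln_div in Hratio by
      (try apply Rdiv_lt_0_compat; try apply Rabs_le_between in Hd2; lra).
    unfold diff2, log_scale; lra. }
  rewrite Hdiff2; eapply Rle_trans; [apply Rabs_ln_1_plus_le, Hd2 | lra].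
Qed.

Lemma hyp_slow_log_increments a : (forall n, 1 <= n -> 0 < a n) -> hyp_slow a ->
  exists eta, 0 < eta /\ exists X, increments_ge X eta (- ln 2) (log_scale a).
Proof.
  intros Hpos Hslow; destruct (Hslow (1 / 2) ltac:(lra)) as [eps [Heps [N HN]]].
  exists (ln (1 + eps)); split; [rewrite <- ln_1; apply ln_increasing; lra |].
  exists (Rabs N); intros u v Hu Huv Hv.
  pose proof (Rabs_pos N); pose proof (Rle_abs N).
  assert (HNu : N <= exp u) by (pose proof (exp_ineq1_le u); lra).
  assert (Hvu : exp v <= (1 + eps) * exp u).
  { pose proof (exp_le v (u + ln (1 + eps)) Hv) as Hexp.
    rewrite exp_plus, exp_ln in Hexp by lra; lra. }
  pose proof (exp_le u v Huv) as Huv'.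
  pose proof (HN (exp u) (exp u) (exp v) HNu (Rle_refl _) Huv' Hvu) as Hratio.
  assert (0 < a (exp u)) by (apply Hpos, one_le_exp; lra).
  assert (0 < a (exp v)) by (apply Hpos, one_le_exp; lra).
  unfold log_scale; rewrite <- ln_div by assumption.
  replace (- ln 2) with (ln (1 / 2)) by (rewrite ln_div, ln_1 by lra; ring).
  apply ln_le; lra.
Qed.

Lemma power_asymptotics_of_log a c alpha beta M X : 0 < c ->
  (forall n, 1 <= n -> 0 < a n) ->
  (forall x, X <= x -> Rabs (log_scale a x - alpha * x - beta) <= M * decay c x) ->
  exists K N, forall n, N <= n -> 1 <= n ->
    exists d, Rabs d <= K * Rpower n (- c) /\ a n = exp beta * Rpower n alpha * (1 + d).
Proof.
  intros Hc Hpos Hlog.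
  destruct (decay_eventually_le c Hc M (1 / 2) ltac:(lra)) as [X1 HX1].
  exists (2 * M), (exp (Rmax X X1)); intros n Hn Hn1.
  assert (Hx : Rmax X X1 <= ln n).
  { rewrite <- (ln_exp (Rmax X X1)); apply ln_le; [apply exp_pos | exact Hn]. }
  pose proof (Rmax_l X X1); pose proof (Rmax_r X X1).
  specialize (Hlog (ln n) ltac:(lra)); specialize (HX1 (ln n) ltac:(lra)).
  set (e := log_scale a (ln n) - alpha * ln n - beta) in Hlog.
  exists (exp e - 1); unfold Rpower; split.
  - change (exp (- c * ln n)) with (decay c (ln n)).
    eapply Rle_trans; [apply Rabs_exp_sub_1_le |]; lra.
  - replace (1 + (exp e - 1)) with (exp e) by ring.
    rewrite <- !exp_plus.
    replace (beta + alpha * ln n + e) with (log_scale a (ln n)) by (unfold e; ring).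
    unfold log_scale; rewrite (exp_ln n) by lra.
    rewrite exp_ln; [reflexivity | now apply Hpos].
Qed.

Theorem lemma2p6 (a : R -> R)
  (Hpos : forall n : R, 1 <= n -> 0 < a n)
  (H1 : hyp_ratio a)
  (H2 : hyp_slow a) :
  exists C : R, 0 < C /\ exists alpha : R, exists c' : R, 0 < c' /\
  exists K N : R, forall n : R, N <= n -> 1 <= n ->
    exists d : R, Rabs d <= K * Rpower n (- c') /\
      a n = C * Rpower n alpha * (1 + d).
Proof.
  destruct (hyp_ratio_log_diff2 a Hpos H1) as [c [Hc [B [X1 [HB Hdiff2]]]]].
  destruct (hyp_slow_log_increments a Hpos H2) as [eta [Heta [X2 Hinc]]].
  pose proof (Rmax_l X1 X2); pose proof (Rmax_r X1 X2); set (X := Rmax X1 X2) in *.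
  assert (Hdiff2' : forall h, 1 <= h <= 2 -> forall x, X <= x ->
            Rabs (diff2 (log_scale a) h x) <= B * decay c x)
    by (intros h Hh x Hx; apply Hdiff2; lra).
  assert (Hinc' : increments_ge X eta (- ln 2) (log_scale a))
    by (intros u v Hu Huv Hv; apply Hinc; lra).
  destruct (affine_asymptotics c Hc (log_scale a) B X eta (- ln 2) HB Heta Hdiff2' Hinc')
    as [alpha [beta [M Hlog]]].
  exists (exp beta); split; [apply exp_pos |].
  exists alpha, c; split; [exact Hc |].
  exact (power_asymptotics_of_log a c alpha beta M X Hc Hpos Hlog).
Qed.
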